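(* Let $G$ be a multiplicative monoid with identity, let $N$ and $M$ be $G$-graded near-rings and let $P$ be a graded ideal of $N$. Then $P$ is a graded almost prime ideal of $N$ if and only if $P\times M$ is a graded almost prime ideal of $N\times M$.
   Context: A near-ring $(N,+,\cdot)$ is a set with two binary operations such that $(N,+)$ is a group (not necessarily abelian), $(N,\cdot)$ is a semigroup, and $(a+b)y = ay+by$ for all $a,b,y\in N$. For a multiplicative monoid $G$ with identity, $N$ is a $G$-graded near-ring if there is a family $\{N_\sigma\}_{\sigma\in G}$ of additive normal subgroups of $N$ with $N=\bigoplus_{\sigma\in G}N_\sigma$ and $N_\sigma N_\tau\subseteq N_{\sigma\tau}$. $N\times M$ is $G$-graded with components $N_\sigma\times M_\sigma$. An ideal $P$ is graded if $P=\bigoplus_{\sigma}(P\cap N_\sigma)$. For ideals $I,J$, $IJ$ denotes their product and $P^2=PP$; for a graded ideal $P$ of a graded near-ring $R$ the paper writes $P^2\cap R$. A graded ideal $P$ of $R$ is graded almost prime if for all graded ideals $I,J$ of $R$ with $IJ\subseteq P$ and $IJ\not\subseteq P^2\cap R$, either $I\subseteq P$ or $J\subseteq P$. *)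

From Stdlib Require Import List.
Import ListNotations.
Set Implicit Arguments.

Record monoid := Monoid {
  m_car :> Type;
  m_mul : m_car -> m_car -> m_car;
  m_one : m_car;
  m_mulA : forall a b c, m_mul a (m_mul b c) = m_mul (m_mul a b) c;
  m_mul1l : forall a, m_mul m_one a = a;
  m_mul1r : forall a, m_mul a m_one = a
}.

(** A (right) near-ring: (N,+) a group (not necessarily abelian),
    (N,.) a semigroup, and (a+b)y = ay + by. *)
Record nearRing := NearRing {
  nr_car :> Type;
  nr_add : nr_car -> nr_car -> nr_car;
  nr_opp : nr_car -> nr_car;
  nr_zero : nr_car;
  nr_mul : nr_car -> nr_car -> nr_car;
  nr_addA : forall a b c, nr_add a (nr_add b c) = nr_add (nr_add a b) c;
  nr_add0l : forall a, nr_add nr_zero a = a;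
  nr_add0r : forall a, nr_add a nr_zero = a;
  nr_addNl : forall a, nr_add (nr_opp a) a = nr_zero;
  nr_addNr : forall a, nr_add a (nr_opp a) = nr_zero;
  nr_mulA : forall a b c, nr_mul a (nr_mul b c) = nr_mul (nr_mul a b) c;
  nr_mulDl : forall a b y, nr_mul (nr_add a b) y = nr_add (nr_mul a y) (nr_mul b y)
}.

Arguments nr_add {n} _ _.
Arguments nr_opp {n} _.
Arguments nr_mul {n} _ _.
Arguments m_mul {m} _ _.

Section Prod.
Variables N M : nearRing.
Definition pr_add (x y : N * M) : N * M := (nr_add (fst x) (fst y), nr_add (snd x) (snd y)).
Definition pr_opp (x : N * M) : N * M := (nr_opp (fst x), nr_opp (snd x)).
Definition pr_zero : N * M := (nr_zero N, nr_zero M).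
Definition pr_mul (x y : N * M) : N * M := (nr_mul (fst x) (fst y), nr_mul (snd x) (snd y)).

Lemma pr_addA a b c : pr_add a (pr_add b c) = pr_add (pr_add a b) c.
Proof. unfold pr_add; simpl; f_equal; apply nr_addA. Qed.
Lemma pr_add0l a : pr_add pr_zero a = a.
Proof. destruct a; unfold pr_add; simpl; f_equal; apply nr_add0l. Qed.
Lemma pr_add0r a : pr_add a pr_zero = a.
Proof. destruct a; unfold pr_add; simpl; f_equal; apply nr_add0r. Qed.
Lemma pr_addNl a : pr_add (pr_opp a) a = pr_zero.
Proof. unfold pr_add, pr_zero; simpl; f_equal; apply nr_addNl. Qed.
Lemma pr_addNr a : pr_add a (pr_opp a) = pr_zero.
Proof. unfold pr_add, pr_zero; simpl; f_equal; apply nr_addNr. Qed.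
Lemma pr_mulA a b c : pr_mul a (pr_mul b c) = pr_mul (pr_mul a b) c.
Proof. unfold pr_mul; simpl; f_equal; apply nr_mulA. Qed.
Lemma pr_mulDl a b y : pr_mul (pr_add a b) y = pr_add (pr_mul a y) (pr_mul b y).
Proof. unfold pr_mul, pr_add; simpl; f_equal; apply nr_mulDl. Qed.

Definition nr_prod : nearRing :=
  @NearRing (N * M) pr_add pr_opp pr_zero pr_mul
    pr_addA pr_add0l pr_add0r pr_addNl pr_addNr pr_mulA pr_mulDl.
End Prod.

Section Defs.
Variable G : monoid.
Variable N : nearRing.

Definition subset (A B : N -> Prop) : Prop := forall x, A x -> B x.

Definition sumL (l : list N) : N := fold_right (@nr_add N) (nr_zero N) l.

Definition is_normal_subgroup (S : N -> Prop) : Prop :=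
  S (nr_zero N) /\
  (forall x y, S x -> S y -> S (nr_add x y)) /\
  (forall x, S x -> S (nr_opp x)) /\
  (forall n x, S x -> S (nr_add (nr_add n x) (nr_opp n))).

(** Ideal of a near-ring (Pilz): a normal subgroup I of (N,+) with
    IN subset I and n(m+i) - nm in I for all n, m in N, i in I. *)
Definition is_ideal (I : N -> Prop) : Prop :=
  is_normal_subgroup I /\
  (forall i n, I i -> I (nr_mul i n)) /\
  (forall n m i, I i -> I (nr_add (nr_mul n (nr_add m i)) (nr_opp (nr_mul n m)))).

(** S is the internal direct sum of the family F (sigma in G):
    S is exactly the set of finite sums of elements of the F sigma, and each
    F sigma meets the subgroup generated by the other F tau (tau <> sigma)
    only in 0. *)
Definition is_dsum (S : N -> Prop) (F : G -> N -> Prop) : Prop :=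
  (forall x, S x <->
     exists l : list (G * N), (forall p, In p l -> F (fst p) (snd p)) /\
                              x = sumL (map snd l)) /\
  (forall (s : G) x, F s x ->
     (exists l : list (G * N),
         (forall p, In p l -> fst p <> s /\ F (fst p) (snd p)) /\
         x = sumL (map snd l)) ->
     x = nr_zero N).

Definition is_grading (F : G -> N -> Prop) : Prop :=
  (forall s, is_normal_subgroup (F s)) /\
  is_dsum (fun _ => True) F /\
  (forall s t x y, F s x -> F t y -> F (m_mul s t) (nr_mul x y)).

Definition graded_ideal (F : G -> N -> Prop) (P : N -> Prop) : Prop :=
  is_ideal P /\ is_dsum P (fun s x => P x /\ F s x).

Definition prodset (I J : N -> Prop) : N -> Prop :=
  fun x => exists i j, I i /\ J j /\ x = nr_mul i j.

Definition graded_almost_prime (F : G -> N -> Prop) (P : N -> Prop) : Prop :=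
  graded_ideal F P /\
  forall I J : N -> Prop, graded_ideal F I -> graded_ideal F J ->
    subset (prodset I J) P ->
    ~ subset (prodset I J) (prodset P P) ->
    subset I P \/ subset J P.
End Defs.

Definition prod_grading (G : monoid) (N M : nearRing)
  (FN : G -> N -> Prop) (FM : G -> M -> Prop) : G -> nr_prod N M -> Prop :=
  fun s x => FN s (fst x) /\ FM s (snd x).

Definition prod_left (N M : nearRing) (P : N -> Prop) : nr_prod N M -> Prop :=
  fun x => P (fst x).

Arguments is_grading {G N} F.
Arguments graded_ideal {G N} F P.
Arguments graded_almost_prime {G N} F P.
Arguments prod_grading {G N M} FN FM _.
Arguments prod_left {N} M P _.

(** Graded ideals pass back and forth between [N] and [N x M]: [I x M] is
    graded when [I] is, and so is the projection to [N] of a graded ideal of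
    [N x M].  The point is that [(a, b)] lies in [(P x M)(P x M)] exactly when
    [a] lies in [PP] and [b] is a product in [M], so the hypotheses of almost
    primeness transfer along both constructions: almost primeness of [P] is
    tested on the projections of [I] and [J], that of [P x M] on [I x M] and
    [J x M]. *)

From Stdlib Require Import List.

Definition proj_left (N M : nearRing) (Q : nr_prod N M -> Prop) : N -> Prop :=
  fun x => exists y, Q (x, y).

Arguments proj_left {N M} Q _.

Definition is_sum_of (G : monoid) (N : nearRing) (F : G -> N -> Prop) (x : N) : Prop :=
  exists l : list (G * N),
    (forall p, In p l -> F (fst p) (snd p)) /\ x = sumL N (map snd l).

Arguments is_sum_of {G N} F x.

Lemma sumL_app (N : nearRing) (l1 l2 : list N) :
  sumL N (l1 ++ l2) = nr_add (sumL N l1) (sumL N l2).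
Proof.
  induction l1 as [|a l IH]; simpl.
  - now rewrite nr_add0l.
  - now rewrite IH, nr_addA.
Qed.

Lemma sumL_prod (N M : nearRing) (l : list (nr_prod N M)) :
  sumL (nr_prod N M) l = (sumL N (map fst l), sumL M (map snd l)).
Proof. induction l as [|a l IH]; simpl; now rewrite ?IH. Qed.

Lemma sumL_closed (N : nearRing) (S : N -> Prop) (l : list N) :
  is_normal_subgroup N S -> (forall x, In x l -> S x) -> S (sumL N l).
Proof.
  intros [S0 [SD _]]. induction l as [|a l IH]; simpl; auto.
Qed.

Lemma sumL_map_zero (N : nearRing) (A : Type) (l : list A) :
  sumL N (map (fun _ => nr_zero N) l) = nr_zero N.
Proof. induction l as [|a l IH]; simpl; now rewrite ?IH, ?nr_add0l. Qed.

Lemma is_sum_of_mono {G : monoid} {N : nearRing} {F F' : G -> N -> Prop} {x : N} :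
  (forall s y, F s y -> F' s y) -> is_sum_of F x -> is_sum_of F' x.
Proof. intros HF [l [Hl Hx]]. exists l. split; auto. Qed.

Lemma is_sum_of_fst {G : monoid} {N M : nearRing}
    {F : G -> nr_prod N M -> Prop} {x : nr_prod N M} :
  is_sum_of F x -> is_sum_of (fun s a => exists b, F s (a, b)) (fst x).
Proof.
  intros [l [Hl ->]].
  exists (map (fun p => (fst p, fst (snd p))) l). split.
  - intros p Hp. apply in_map_iff in Hp as [[s [a b]] [<- Hq]].
    exists b. exact (Hl _ Hq).
  - now rewrite sumL_prod, !map_map.
Qed.

Lemma is_sum_of_snd {G : monoid} {N M : nearRing}
    {F : G -> nr_prod N M -> Prop} {x : nr_prod N M} :
  is_sum_of F x -> is_sum_of (fun s b => exists a, F s (a, b)) (snd x).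
Proof.
  intros [l [Hl ->]].
  exists (map (fun p => (fst p, snd (snd p))) l). split.
  - intros p Hp. apply in_map_iff in Hp as [[s [a b]] [<- Hq]].
    exists a. exact (Hl _ Hq).
  - now rewrite sumL_prod, !map_map.
Qed.

Lemma is_sum_of_pair {G : monoid} {N M : nearRing}
    {FN : G -> N -> Prop} {FM : G -> M -> Prop} {a : N} {b : M} :
  (forall s, FN s (nr_zero N)) -> (forall s, FM s (nr_zero M)) ->
  is_sum_of FN a -> is_sum_of FM b ->
  is_sum_of (prod_grading FN FM) ((a, b) : nr_prod N M).
Proof.
  intros FN0 FM0 [la [Hla ->]] [lb [Hlb ->]].
  exists (map (fun p => (fst p, (snd p, nr_zero M))) la ++
          map (fun p => (fst p, (nr_zero N, snd p))) lb). split.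
  - intros p Hp. unfold prod_grading.
    apply in_app_or in Hp as [Hp|Hp]; apply in_map_iff in Hp as [q [<- Hq]]; simpl; auto.
  - rewrite map_app, sumL_app, !map_map, !sumL_prod, !map_map; simpl.
    rewrite !sumL_map_zero. unfold pr_add; simpl.
    now rewrite nr_add0r, nr_add0l.
Qed.

Lemma is_dsum_restrict {G : monoid} {N : nearRing} {F : G -> N -> Prop} {S : N -> Prop} :
  is_dsum G N (fun _ => True) F -> is_normal_subgroup N S ->
  (forall x, S x -> is_sum_of (fun s y => S y /\ F s y) x) ->
  is_dsum G N S (fun s y => S y /\ F s y).
Proof.
  intros [_ Findep] HS Hspan. split.
  - intros x. split; [apply Hspan|].
    intros [l [Hl ->]]. apply sumL_closed; [exact HS|].
    intros x Hx. apply in_map_iff in Hx as [p [<- Hp]]. exact (proj1 (Hl p Hp)).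
  - intros s x [_ Hx] [l [Hl Hsum]]. apply (Findep s x Hx).
    exists l. split; [|exact Hsum].
    intros p Hp. destruct (Hl p Hp) as [Hne [_ HF]]. auto.
Qed.

Lemma is_normal_subgroup_prod {N M : nearRing} {A : N -> Prop} {B : M -> Prop} :
  is_normal_subgroup N A -> is_normal_subgroup M B ->
  is_normal_subgroup (nr_prod N M) (fun x => A (fst x) /\ B (snd x)).
Proof.
  intros (A0 & AD & AN & AC) (B0 & BD & BN & BC).
  repeat split; simpl; intros; intuition.
Qed.

Lemma is_grading_prod {G : monoid} {N M : nearRing}
    {FN : G -> N -> Prop} {FM : G -> M -> Prop} :
  is_grading FN -> is_grading FM -> is_grading (prod_grading FN FM).
Proof.
  intros (FNsub & [FNspan FNindep] & FNmul) (FMsub & [FMspan FMindep] & FMmul).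
  split; [|split; [split|]].
  - intros s. apply is_normal_subgroup_prod; auto.
  - intros [a b]. split; [|easy]. intros _.
    apply is_sum_of_pair.
    + intros s. apply (FNsub s).
    + intros s. apply (FMsub s).
    + exact (proj1 (FNspan a) I).
    + exact (proj1 (FMspan b) I).
  - intros s [a b] [Fa Fb] Hsum. change ((a, b) = (nr_zero N, nr_zero M)). f_equal.
    + apply (FNindep s a Fa). change (is_sum_of (fun t y => t <> s /\ FN t y) a).
      apply (is_sum_of_fst (F := fun t x => t <> s /\ prod_grading FN FM t x)) in Hsum.
      revert Hsum. apply is_sum_of_mono. intros t y [z [Ht [Hy _]]]. auto.
    + apply (FMindep s b Fb). change (is_sum_of (fun t y => t <> s /\ FM t y) b).
      apply (is_sum_of_snd (F := fun t x => t <> s /\ prod_grading FN FM t x)) in Hsum.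
      revert Hsum. apply is_sum_of_mono. intros t y [z [Ht [_ Hy]]]. auto.
  - intros s t x y [] []. split; simpl; auto.
Qed.

Lemma is_ideal_prod_left {N : nearRing} (M : nearRing) {P : N -> Prop} :
  is_ideal N P -> is_ideal (nr_prod N M) (prod_left M P).
Proof.
  intros [(P0 & PD & PN & PC) [PM PT]].
  repeat split; unfold prod_left; simpl; intros; auto.
Qed.

Lemma is_ideal_proj_left {N M : nearRing} {Q : nr_prod N M -> Prop} :
  is_ideal (nr_prod N M) Q -> is_ideal N (proj_left Q).
Proof.
  intros [(Q0 & QD & QN & QC) [QM QT]].
  repeat split; unfold proj_left.
  - now exists (nr_zero M).
  - intros x y [b Hb] [b' Hb']. exact (ex_intro _ _ (QD _ _ Hb Hb')).
  - intros x [b Hb]. exact (ex_intro _ _ (QN _ Hb)).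
  - intros n x [b Hb]. exact (ex_intro _ _ (QC (n, nr_zero M) _ Hb)).
  - intros i n [b Hb]. exact (ex_intro _ _ (QM _ (n, nr_zero M) Hb)).
  - intros n m i [b Hb]. exact (ex_intro _ _ (QT (n, nr_zero M) (m, nr_zero M) _ Hb)).
Qed.

Lemma graded_ideal_prod_left {G : monoid} {N M : nearRing}
    {FN : G -> N -> Prop} {FM : G -> M -> Prop} {P : N -> Prop} :
  is_grading FN -> is_grading FM -> graded_ideal FN P ->
  graded_ideal (prod_grading FN FM) (prod_left M P).
Proof.
  intros HN HM [HP [HPspan _]].
  pose proof (is_ideal_prod_left M HP) as HPM.
  split; [exact HPM|]. apply is_dsum_restrict.
  - exact (proj1 (proj2 (is_grading_prod HN HM))).
  - exact (proj1 HPM).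
  - intros [a b] Ha.
    assert (Hab : is_sum_of (prod_grading (fun s x => P x /\ FN s x) FM) ((a, b) : nr_prod N M)).
    { apply is_sum_of_pair.
      - intros s. split; [apply (proj1 HP)|apply (proj1 HN s)].
      - intros s. apply (proj1 HM s).
      - exact (proj1 (HPspan a) Ha).
      - exact (proj1 (proj1 (proj1 (proj2 HM)) b) I). }
    revert Hab. apply is_sum_of_mono.
    intros s x [[Px Fx] Fy]. split; [exact Px|split; assumption].
Qed.

Lemma graded_ideal_proj_left {G : monoid} {N M : nearRing}
    {FN : G -> N -> Prop} {FM : G -> M -> Prop} {Q : nr_prod N M -> Prop} :
  is_grading FN -> graded_ideal (prod_grading FN FM) Q -> graded_ideal FN (proj_left Q).
Proof.
  intros HN [HQ [HQspan _]].
  pose proof (is_ideal_proj_left HQ) as HQN.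
  split; [exact HQN|]. apply is_dsum_restrict.
  - exact (proj1 (proj2 HN)).
  - exact (proj1 HQN).
  - intros x [y Hxy].
    assert (Hsum : is_sum_of (fun s z => Q z /\ prod_grading FN FM s z) ((x, y) : nr_prod N M))
      by exact (proj1 (HQspan (x, y)) Hxy).
    apply is_sum_of_fst in Hsum. revert Hsum. apply is_sum_of_mono.
    intros s a [b [Hab [Fa _]]]. split; [exists b|]; assumption.
Qed.

Lemma prodset_prod_left {N M : nearRing} {P Q : N -> Prop} {a : N} {b : M} :
  prodset (nr_prod N M) (prod_left M P) (prod_left M Q) (a, b) <->
  prodset N P Q a /\ prodset M (fun _ => True) (fun _ => True) b.
Proof.
  unfold prodset, prod_left. split.
  - intros [[p y] [[q z] [Hp [Hq E]]]]. injection E as -> ->. simpl in *.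
    split; [exists p, q | exists y, z]; auto.
  - intros [[p [q [Hp [Hq ->]]]] [y [z [_ [_ ->]]]]].
    exists (p, y), (q, z). auto.
Qed.

Lemma proj_left_prodset {N M : nearRing} {I J : nr_prod N M -> Prop} {a : N} :
  proj_left (prodset (nr_prod N M) I J) a <-> prodset N (proj_left I) (proj_left J) a.
Proof.
  unfold proj_left, prodset. split.
  - intros [b [[i y] [[j z] [Hi [Hj E]]]]]. injection E as -> _.
    exists i, j. split; [exists y|split; [exists z|]]; auto.
  - intros [i [j [[y Hi] [[z Hj] ->]]]].
    exists (nr_mul y z), (i, y), (j, z). auto.
Qed.

Lemma subset_prod_left {N M : nearRing} {I J : N -> Prop} :
  subset (nr_prod N M) (prod_left M I) (prod_left M J) <-> subset N I J.
Proof.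
  unfold subset, prod_left. split.
  - intros H x Hx. exact (H (x, nr_zero M) Hx).
  - intros H x. apply H.
Qed.

Lemma subset_proj_left {N M : nearRing} {Q : nr_prod N M -> Prop} {P : N -> Prop} :
  subset N (proj_left Q) P <-> subset (nr_prod N M) Q (prod_left M P).
Proof.
  unfold subset, proj_left, prod_left. split.
  - intros H [a b] Hab. exact (H a (ex_intro _ b Hab)).
  - intros H a [b Hab]. exact (H _ Hab).
Qed.

Lemma graded_almost_prime_prod_left {G : monoid} {N M : nearRing}
    {FN : G -> N -> Prop} {FM : G -> M -> Prop} {P : N -> Prop} :
  is_grading FN -> is_grading FM -> graded_almost_prime FN P ->
  graded_almost_prime (prod_grading FN FM) (prod_left M P).
Proof.
  intros HN HM [HP Hprime]. split; [exact (graded_ideal_prod_left HN HM HP)|].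
  intros I J HI HJ HIJ HnIJ.
  destruct (Hprime (proj_left I) (proj_left J)
              (graded_ideal_proj_left HN HI) (graded_ideal_proj_left HN HJ)) as [HIP|HJP].
  - intros a Ha. apply proj_left_prodset in Ha.
    exact (proj2 subset_proj_left HIJ a Ha).
  - intros HPP. apply HnIJ. intros [a b] Hab. apply prodset_prod_left. split.
    + apply HPP, proj_left_prodset. now exists b.
    + destruct Hab as [[i y] [[j z] [_ [_ E]]]]. injection E as _ ->.
      now exists y, z.
  - left. exact (proj1 subset_proj_left HIP).
  - right. exact (proj1 subset_proj_left HJP).
Qed.

Lemma graded_almost_prime_of_prod_left {G : monoid} {N M : nearRing}
    {FN : G -> N -> Prop} {FM : G -> M -> Prop} {P : N -> Prop} :
  is_grading FN -> is_grading FM -> graded_ideal FN P ->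
  graded_almost_prime (prod_grading FN FM) (prod_left M P) ->
  graded_almost_prime FN P.
Proof.
  intros HN HM HP [_ Hprime]. split; [exact HP|].
  intros I J HI HJ HIJ HnIJ.
  destruct (Hprime (prod_left M I) (prod_left M J)
              (graded_ideal_prod_left HN HM HI) (graded_ideal_prod_left HN HM HJ))
    as [HIP|HJP].
  - intros [a b] Hab. apply prodset_prod_left in Hab as [Hab _]. exact (HIJ a Hab).
  - intros HPP. apply HnIJ. intros a Ha.
    assert (Hprod : prodset M (fun _ => True) (fun _ => True)
                      (nr_mul (nr_zero M) (nr_zero M))) by now exists (nr_zero M), (nr_zero M).
    assert (HaPP := HPP (a, nr_mul (nr_zero M) (nr_zero M))
                        (proj2 prodset_prod_left (conj Ha Hprod))).
    exact (proj1 (proj1 prodset_prod_left HaPP)).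
  - left. exact (proj1 subset_prod_left HIP).
  - right. exact (proj1 subset_prod_left HJP).
Qed.

Theorem theorem17 (G : monoid) (N M : nearRing)
  (FN : G -> N -> Prop) (FM : G -> M -> Prop) (P : N -> Prop) :
  is_grading FN -> is_grading FM -> graded_ideal FN P ->
  (graded_almost_prime FN P <->
   graded_almost_prime (prod_grading FN FM) (prod_left M P)).
Proof.
  intros HN HM HP. split.
  - exact (graded_almost_prime_prod_left HN HM).
  - exact (graded_almost_prime_of_prod_left HN HM HP).
Qed.
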